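(* Let $d\ge 1$, let $g_k\in\mathbb{R}^d$ be a fixed (true) gradient vector, let $H_k\in\mathbb{R}^{d\times d}$ be a fixed matrix (an inverse Hessian approximation, not necessarily symmetric or positive definite), and let $\beta_k\in\mathbb{R}$ be fixed. Let $\widehat{g}_k = g_k + v_k$, where $v_k$ is a random vector with $\mathbb{E}[v_k]=0$ and $\mathbb{E}[v_k v_k^{\top}] = \sigma_g^2 I_d$ for some $\sigma_g^2\ge 0$. Define $p_k = -H_k g_k$ and $\widehat{p}_k = -H_k\widehat{g}_k$. If $$\beta_k > \frac{p_k^{\top} g_k - \sigma_g^2\,\mathrm{Tr}(H_k)}{g_k^{\top} g_k + d\,\sigma_g^2},$$ then $$\mathbb{E}\big[(\widehat{p}_k - \beta_k\widehat{g}_k)^{\top}\widehat{g}_k\big] < 0 .$$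
   Context: This concerns stochastic quasi-Newton optimisation of a function with gradient $g_k$ at iterate $x_k$, where only noisy gradient measurements $\widehat{g}_k$ are available; the search direction is $\widehat{p}_k=-H_k\widehat{g}_k$ and it is modified to $\widehat{p}_k-\beta_k\widehat{g}_k$ to obtain a descent direction in expectation. The expectation is taken over the gradient noise $v_k$, with $H_k$, $g_k$, $\beta_k$ treated as deterministic. Additionally assume $g_k^{\top}g_k + d\sigma_g^2>0$ so the bound is well defined. *)

From HB Require Import structures.
From mathcomp Require Import all_boot all_order all_algebra.
From mathcomp Require Import all_classical all_reals all_analysis.
Set Implicit Arguments. Unset Strict Implicit. Unset Printing Implicit Defensive.
Import Order.TTheory GRing.Theory Num.Theory.
Local Open Scope ring_scope.

Definition dotv (R : pzRingType) (d : nat) (u w : 'cV[R]_d) : R := (u^T *m w) 0 0.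

From HB Require Import structures.
From mathcomp Require Import all_boot all_order all_algebra.
From mathcomp Require Import all_classical all_reals all_analysis.
From mathcomp Require Import ring.
Import Order.TTheory GRing.Theory Num.Theory.
Local Open Scope ring_scope.

(* The quantity (p^ - beta g^)^T g^ is the quadratic form (A g^)^T g^ with
   A = -H - beta I and g^ = g + v.  For centred noise with second-moment
   matrix C the cross terms vanish in expectation, so the expectation is
   (A g)^T g + tr (A C).  With C = sigma^2 I this is
   p^T g - sigma^2 tr H - beta (g^T g + d sigma^2), which is negative exactly
   when beta exceeds the stated threshold. *)

Section dotv_algebra.
Variables (R : comPzRingType) (n : nat).
Implicit Types (u w x : 'cV[R]_n) (A : 'M[R]_n).

Lemma dotvE u w : dotv u w = \sum_i u i 0 * w i 0.
Proof. by rewrite /dotv mxE; apply: eq_bigr => i _; rewrite mxE. Qed.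

Lemma dotvC u w : dotv u w = dotv w u.
Proof. by rewrite !dotvE; apply: eq_bigr => i _; rewrite mulrC. Qed.

Lemma dotvDl u w x : dotv (u + w) x = dotv u x + dotv w x.
Proof. by rewrite !dotvE -big_split; apply: eq_bigr => i _; rewrite mxE mulrDl. Qed.

Lemma dotvDr u w x : dotv x (u + w) = dotv x u + dotv x w.
Proof. by rewrite ![dotv x _]dotvC dotvDl. Qed.

Lemma dotvZl a u w : dotv (a *: u) w = a * dotv u w.
Proof. by rewrite !dotvE mulr_sumr; apply: eq_bigr => i _; rewrite mxE mulrA. Qed.

Lemma dotvNl u w : dotv (- u) w = - dotv u w.
Proof. by rewrite -scaleN1r dotvZl mulN1r. Qed.

Lemma dotv_mulmxl A u w : dotv (A *m u) w = dotv u (A^T *m w).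
Proof. by rewrite /dotv trmx_mul mulmxA. Qed.

Lemma dotv_mulmxE A u : dotv (A *m u) u = \sum_i \sum_j u j 0 * u i 0 * A i j.
Proof.
rewrite dotvE; apply: eq_bigr => i _.
by rewrite mxE mulr_suml; apply: eq_bigr => j _; ring.
Qed.

Lemma mxtrace_mulmxE A (B : 'M[R]_n) : \tr (A *m B) = \sum_i \sum_j A i j * B j i.
Proof. by apply: eq_bigr => i _; rewrite mxE. Qed.

Lemma dotv_mulmx_shift A u x :
  dotv (A *m (u + x)) (u + x)
  = dotv (A *m u) u + dotv x (A *m u + A^T *m u) + dotv (A *m x) x.
Proof.
rewrite mulmxDr !dotvDl !dotvDr [dotv (A *m u) x]dotvC [dotv (A *m x) u]dotv_mulmxl.
ring.
Qed.

End dotv_algebra.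

Section expectation_quadratic_form.
Local Open Scope ereal_scope.
Context {R : realType} {dm : measure_display} {T : measurableType dm}.
Context (P : probability T R) {n : nat}.
Implicit Types (v : T -> 'cV[R]_n) (u : 'cV[R]_n) (A : 'M[R]_n).

Lemma Lfun_sum {I : Type} (s : seq I) {F : I -> T -> R} :
  (forall i, F i \in Lfun P 1) -> (fun w => \sum_(i <- s) F i w)%R \in Lfun P 1.
Proof. by move=> LF; rewrite -fct_sumE rpred_sum. Qed.

Lemma expectation_sum_index {I : Type} (s : seq I) {F : I -> T -> R} :
  (forall i, F i \in Lfun P 1) ->
  'E_P[(fun w => \sum_(i <- s) F i w)%R] = \sum_(i <- s) 'E_P[F i].
Proof.
move=> LF; elim: s => [|i s IH].
  by under eq_fun do rewrite big_nil; rewrite big_nil expectation_cst.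
under eq_fun do rewrite big_cons.
by rewrite big_cons -IH (expectationD (LF i) (Lfun_sum s LF)).
Qed.

Lemma Lfun_lincomb {I : Type} (s : seq I) (F : I -> T -> R) (c : I -> R) :
  (forall i, F i \in Lfun P 1) -> (fun w => \sum_(i <- s) F i w * c i)%R \in Lfun P 1.
Proof.
by move=> LF; apply: (Lfun_sum s (F := fun i => c i \o* F i)) => i; apply: Lfun_scale.
Qed.

Lemma expectation_lincomb {I : Type} (s : seq I) (F : I -> T -> R) (c m : I -> R) :
  (forall i, F i \in Lfun P 1) -> (forall i, 'E_P[F i] = (m i)%:E) ->
  'E_P[(fun w => \sum_(i <- s) F i w * c i)%R] = (\sum_(i <- s) m i * c i)%:E.
Proof.
move=> LF EF; rewrite (expectation_sum_index s (F := fun i => c i \o* F i)); last first.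
  by move=> i; apply: Lfun_scale.
by rewrite -sumEFin; apply: eq_bigr => i _; rewrite expectationZl // EF muleC.
Qed.

Lemma Lfun_dotv v u :
  (forall i, (fun w => v w i ord0) \in Lfun P 1) -> (fun w => dotv (v w) u) \in Lfun P 1.
Proof.
move=> Lv; under eq_fun do rewrite dotvE.
exact: (Lfun_lincomb _ (fun i w => v w i ord0)).
Qed.

Lemma expectation_dotv v u (mu : 'cV[R]_n) :
  (forall i, (fun w => v w i ord0) \in Lfun P 1) ->
  (forall i, 'E_P[fun w => v w i ord0] = (mu i ord0)%:E) ->
  'E_P[fun w => dotv (v w) u] = (dotv mu u)%:E.
Proof.
move=> Lv Ev; under eq_fun do rewrite dotvE.
by rewrite dotvE; exact: (expectation_lincomb _ (fun i w => v w i ord0)).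
Qed.

Lemma Lfun_quadratic v A :
  (forall i j, (fun w => v w i ord0 * v w j ord0)%R \in Lfun P 1) ->
  (fun w => dotv (A *m v w) (v w)) \in Lfun P 1.
Proof.
move=> Lvv; under eq_fun do rewrite dotv_mulmxE.
by apply: Lfun_sum => i; apply: (Lfun_lincomb _ (fun j w => v w j ord0 * v w i ord0)%R).
Qed.

Lemma expectation_quadratic v A (C : 'M[R]_n) :
  (forall i j, (fun w => v w i ord0 * v w j ord0)%R \in Lfun P 1) ->
  (forall i j, 'E_P[(fun w => v w i ord0 * v w j ord0)%R] = (C i j)%:E) ->
  'E_P[fun w => dotv (A *m v w) (v w)] = (\tr (A *m C))%:E.
Proof.
move=> Lvv Evv; under eq_fun do rewrite dotv_mulmxE.
pose F i w := (\sum_j v w j ord0 * v w i ord0 * A i j)%R.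
rewrite mxtrace_mulmxE (expectation_sum_index _ (F := F)) => [|i]; last first.
  exact: (Lfun_lincomb _ (fun j w => v w j ord0 * v w i ord0)%R).
rewrite -sumEFin; apply: eq_bigr => i _.
rewrite (expectation_lincomb _ (fun j w => v w j ord0 * v w i ord0)%R _ (fun j => C j i)) //.
by congr (_%:E); apply: eq_bigr => j _; rewrite mulrC.
Qed.

Lemma expectation_quadratic_shift u v A (C : 'M[R]_n) :
  (forall i, (fun w => v w i ord0) \in Lfun P 1) ->
  (forall i j, (fun w => v w i ord0 * v w j ord0)%R \in Lfun P 1) ->
  (forall i, 'E_P[fun w => v w i ord0] = 0) ->
  (forall i j, 'E_P[(fun w => v w i ord0 * v w j ord0)%R] = (C i j)%:E) ->
  'E_P[fun w => dotv (A *m (u + v w)) (u + v w)] = (dotv (A *m u) u + \tr (A *m C))%:E.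
Proof.
move=> Lv Lvv Ev Evv; under eq_fun do rewrite dotv_mulmx_shift.
have Ev0 i : 'E_P[fun w => v w i ord0] = ((0 : 'cV[R]_n) i ord0)%:E by rewrite mxE Ev.
rewrite expectationD ?rpredD ?Lfun_cst ?Lfun_dotv ?Lfun_quadratic //.
rewrite expectationD ?Lfun_cst ?Lfun_dotv //.
rewrite expectation_cst (expectation_dotv _ _ _ Lv Ev0) (expectation_quadratic _ _ _ Lvv Evv).
by rewrite [dotv 0 _]dotvE big1 ?mule0 ?adde0 // => i _; rewrite mxE mul0r.
Qed.

End expectation_quadratic_form.

Theorem mainTheorem1 (R : realType) (dm : measure_display) (T : measurableType dm)
  (P : probability T R) (d : nat) (hd : (0 < d)%N)
  (g : 'cV[R]_d) (H : 'M[R]_d) (beta sigma2 : R) (v : T -> 'cV[R]_d)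
  (hsigma : 0 <= sigma2)
  (hmeas : forall i : 'I_d, measurable_fun setT (fun w => v w i ord0))
  (hint1 : forall i : 'I_d, P.-integrable setT (fun w => (v w i ord0)%:E))
  (hint2 : forall i j : 'I_d, P.-integrable setT (fun w => (v w i ord0 * v w j ord0)%:E))
  (hmean : forall i : 'I_d, ('E_P[fun w => v w i ord0] = 0)%E)
  (hcov : forall i j : 'I_d,
     ('E_P[fun w => (v w i ord0 * v w j ord0)%R] = (sigma2 * (i == j)%:R)%:E)%E)
  (hden : 0 < dotv g g + d%:R * sigma2)
  (hbeta : beta > (dotv (- (H *m g)) g - sigma2 * \tr H) / (dotv g g + d%:R * sigma2)) :
  let ghat := fun w => g + v w in
  let phat := fun w => - (H *m ghat w) in
  ('E_P[fun w => (dotv (phat w - beta *: ghat w) (ghat w))%R] < 0)%E.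
Proof.
cbv zeta; pose A := - H - beta%:M.
have -> : (fun w => dotv (- (H *m (g + v w)) - beta *: (g + v w)) (g + v w))
          = (fun w => dotv (A *m (g + v w)) (g + v w)).
  by apply/funext => w; rewrite mulmxBl mulNmx mul_scalar_mx.
have Lv i : (fun w => v w i ord0) \in Lfun P 1 by apply/Lfun1_integrable; exact: hint1.
have Lvv i j : (fun w => v w i ord0 * v w j ord0) \in Lfun P 1.
  by apply/Lfun1_integrable; exact: hint2.
have Evv i j : ('E_P[(fun w => v w i ord0 * v w j ord0)%R] = (sigma2%:M i j)%:E)%E.
  by rewrite hcov !mxE mulr_natr.
rewrite (expectation_quadratic_shift P g v A sigma2%:M Lv Lvv hmean Evv).
have -> : dotv (A *m g) g + \tr (A *m sigma2%:M)
          = dotv (- (H *m g)) g - sigma2 * \tr H - beta * (dotv g g + d%:R * sigma2).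
  rewrite mulmxBl mulNmx mul_scalar_mx mul_mx_scalar dotvDl !dotvNl dotvZl.
  rewrite mxtraceZ /A raddfB /= raddfN /= mxtrace_scalar -mulr_natr.
  ring.
by rewrite lte_fin subr_lt0 -ltr_pdivrMr.
Qed.
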